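(* Let $\Xi:M_l\to M_l$ be the pinching map $\Xi((m_{ij}))=(\delta_{ij}m_{ij})$ and let $\Psi:M_N\to M_k$ be any quantum channel, with $K_\Psi=\Psi(D_N)$. Then the image $K_{\Xi\otimes\Psi}=(\Xi\otimes\Psi)(D_{lN})\subset M_l\otimes M_k$ is $$K_{\Xi\otimes\Psi}=\{a_1B_1\oplus\dots\oplus a_lB_l:\ (a_i)\in\Delta_l,\ B_1,\dots,B_l\in K_\Psi\},$$ where $\oplus$ denotes the block-diagonal matrix in $M_l\otimes M_k\cong M_l(M_k)$.
   Context: $\Delta_l$ is the probability simplex $\{(a_1,\dots,a_l):a_i\ge0,\sum a_i=1\}$; $D_d$ is the set of $d\times d$ density matrices. *)

From HB Require Import structures.
From mathcomp Require Import all_boot all_order all_algebra.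
Set Implicit Arguments. Unset Strict Implicit. Unset Printing Implicit Defensive.
Import Order.TTheory GRing.Theory Num.Theory.
Local Open Scope ring_scope.

Section Defs.
Variable C : numClosedFieldType.

Definition adjmx m n (A : 'M[C]_(m, n)) : 'M[C]_(n, m) := (map_mx Num.conj A)^T.

Definition psdmx n (A : 'M[C]_n) : Prop :=
  adjmx A = A /\ forall v : 'rV[C]_n, 0 <= (v *m A *m adjmx v) 0 0.

Definition density n (A : 'M[C]_n) : Prop := psdmx A /\ \tr A = 1.

(* identification of 'I_(m*n) with 'I_m * 'I_n (inverse of mxvec_index) *)
Definition pair_of_idx m n (r : 'I_(m * n)) : 'I_m * 'I_n :=
  enum_val (cast_ord (esym (mxvec_cast m n)) r).

Definition kron m n p q (A : 'M[C]_(m, n)) (B : 'M[C]_(p, q)) : 'M[C]_(m * p, n * q) :=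
  \matrix_(r, c)
    (let ik := @pair_of_idx m p r in let jl := @pair_of_idx n q c in
     A ik.1 jl.1 * B ik.2 jl.2).

Definition blockmx l N (X : 'M[C]_(l * N)) (i j : 'I_l) : 'M[C]_N :=
  \matrix_(a, b) X (mxvec_index i a) (mxvec_index j b).

Definition tensmap l l' N k (Phi : 'M[C]_l -> 'M[C]_l') (Psi : 'M[C]_N -> 'M[C]_k)
    (X : 'M[C]_(l * N)) : 'M[C]_(l' * k) :=
  \sum_(i < l) \sum_(j < l) kron (Phi (delta_mx i j)) (Psi (blockmx X i j)).

Definition quantum_channel N k (Psi : {linear 'M[C]_N -> 'M[C]_k}) : Prop :=
  (forall m (X : 'M[C]_(m * N)), psdmx X -> psdmx (tensmap id Psi X)) /\
  (forall X : 'M[C]_N, \tr (Psi X) = \tr X).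

Definition pinching l (M : 'M[C]_l) : 'M[C]_l := \matrix_(i, j) ((i == j)%:R * M i j).

Definition in_simplex l (a : 'I_l -> C) : Prop :=
  (forall i, 0 <= a i) /\ \sum_(i < l) a i = 1.

Definition blockdiag l k (a : 'I_l -> C) (B : 'I_l -> 'M[C]_k) : 'M[C]_(l * k) :=
  \sum_(i < l) kron (delta_mx i i) (a i *: B i).

End Defs.

From mathcomp Require Import all_boot all_order all_algebra.
Import Order.TTheory GRing.Theory Num.Theory.
Local Open Scope ring_scope.
Set Implicit Arguments. Unset Strict Implicit.

(* Writing X in M_l(M_N) by blocks X_ij, the pinching kills the off-diagonal
   blocks, so (Xi (x) Psi)(X) = Psi(X_11) (+) ... (+) Psi(X_ll).  If X is a
   density matrix, each X_ii is positive semidefinite with trace a_i, and the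
   a_i sum to 1: hence X_ii = a_i Z_i with Z_i a density matrix (when a_i = 0
   the block X_ii vanishes, being positive with zero trace, and any density Z_i
   will do).  Conversely a_1 Z_1 (+) ... (+) a_l Z_l is a density matrix with
   image a_1 Psi(Z_1) (+) ... (+) a_l Psi(Z_l). *)

Section BlockMatrices.
Variable C : numClosedFieldType.
Implicit Types (m n p q l N k : nat).

Lemma mxvec_indexK m n (i : 'I_m) (a : 'I_n) :
  pair_of_idx (mxvec_index i a) = (i, a).
Proof. by rewrite /pair_of_idx /mxvec_index cast_ordK enum_rankK. Qed.

Lemma pair_of_idxK m n (r : 'I_(m * n)) :
  mxvec_index (pair_of_idx r).1 (pair_of_idx r).2 = r.
Proof.
by rewrite /pair_of_idx /mxvec_index -surjective_pairing enum_valK cast_ordKV.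
Qed.

Lemma eq_mxvec_index m n (i j : 'I_m) (a b : 'I_n) :
  (mxvec_index i a == mxvec_index j b) = (i == j) && (a == b).
Proof.
apply/eqP/andP => [eq_ia_jb|[/eqP -> /eqP -> //]].
by have := mxvec_indexK i a; rewrite eq_ia_jb mxvec_indexK => -[-> ->].
Qed.

Lemma big_mxvec_index m n (F : 'I_(m * n) -> C) :
  \sum_r F r = \sum_(i < m) \sum_(a < n) F (mxvec_index i a).
Proof.
rewrite pair_big /= (reindex (fun p : 'I_m * 'I_n => mxvec_index p.1 p.2)) //=.
exists (@pair_of_idx m n) => [p _|r _]; last exact: pair_of_idxK.
by rewrite mxvec_indexK -surjective_pairing.
Qed.

Lemma mxvec_index_matrixP m n (M M' : 'M[C]_(m * n)) :
  (forall i a j b, M (mxvec_index i a) (mxvec_index j b) =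
                   M' (mxvec_index i a) (mxvec_index j b)) -> M = M'.
Proof.
by move=> eqMM'; apply/matrixP => r s; rewrite -(pair_of_idxK r) -(pair_of_idxK s).
Qed.

Lemma kron_mxvec_index m n p q (A : 'M[C]_(m, n)) (B : 'M[C]_(p, q)) i j a b :
  kron A B (mxvec_index i a) (mxvec_index j b) = A i j * B a b.
Proof. by rewrite mxE !mxvec_indexK. Qed.

Lemma kron0mx m n p q (B : 'M[C]_(p, q)) : kron (0 : 'M[C]_(m, n)) B = 0.
Proof. by apply/matrixP => r s; rewrite !mxE /= mxE mul0r. Qed.

Lemma blockmx_kron l N (A : 'M[C]_l) (B : 'M[C]_N) i j :
  blockmx (kron A B) i j = A i j *: B.
Proof. by apply/matrixP => a b; rewrite !mxE !mxvec_indexK. Qed.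

Lemma blockmx_sum l N I (r : seq I) (P : pred I) (F : I -> 'M[C]_(l * N)) i j :
  blockmx (\sum_(t <- r | P t) F t) i j = \sum_(t <- r | P t) blockmx (F t) i j.
Proof.
apply/matrixP => a b; rewrite mxE !summxE.
by apply: eq_bigr => t _; rewrite mxE.
Qed.

Lemma mxtrace_blockmx l N (X : 'M[C]_(l * N)) :
  \tr X = \sum_i \tr (blockmx X i i).
Proof.
rewrite /mxtrace big_mxvec_index; apply: eq_bigr => i _.
by apply: eq_bigr => a _; rewrite mxE.
Qed.

Lemma blockmx_blockdiag l N (a : 'I_l -> C) (W : 'I_l -> 'M[C]_N) i :
  blockmx (blockdiag a W) i i = a i *: W i.
Proof.
rewrite blockmx_sum (bigD1 i) //= big1 ?addr0.
  by rewrite blockmx_kron mxE !eqxx scale1r.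
by move=> j /negPf neq_ji; rewrite blockmx_kron mxE eq_sym neq_ji scale0r.
Qed.

Lemma pinching_delta l (i j : 'I_l) :
  pinching (delta_mx i j : 'M[C]_l) = (i == j)%:R *: delta_mx i j.
Proof.
apply/matrixP => r s; rewrite !mxE.
by case: (r =P i) => [->|_]; case: (s =P j) => [->|_]; rewrite ?mulr0.
Qed.

Lemma tensmap_pinching l N k (Psi : {linear 'M[C]_N -> 'M[C]_k}) (X : 'M[C]_(l * N)) :
  tensmap (@pinching C l) Psi X = blockdiag (fun=> 1) (fun i => Psi (blockmx X i i)).
Proof.
apply: eq_bigr => i _; rewrite scale1r (bigD1 i) //= big1 ?addr0.
  by rewrite pinching_delta eqxx scale1r.
by move=> j /negPf neq_ji; rewrite pinching_delta eq_sym neq_ji scale0r kron0mx.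
Qed.

(* The isometry M_N -> M_l(M_N) onto the i-th block row; it realizes
   [blockmx _ i i] and [kron (delta_mx i i) _] as congruences. *)
Definition blockrow l N (i : 'I_l) : 'M[C]_(N, l * N) :=
  \matrix_(a, r) (r == mxvec_index i a)%:R.

Lemma mul_blockrow_mxvec_index l N m (M : 'M[C]_(m, N)) (i j : 'I_l) r b :
  (M *m blockrow N i) r (mxvec_index j b) = (j == i)%:R * M r b.
Proof.
rewrite mxE (bigD1 b) //= big1 => [|a neq_ab].
  by rewrite mxE eq_mxvec_index eqxx andbT addr0 mulrC.
by rewrite mxE eq_mxvec_index [b == _]eq_sym (negPf neq_ab) andbF mulr0.
Qed.

Lemma adjmx_blockrow_mul l N m (M : 'M[C]_(N, m)) (i j : 'I_l) a s :
  (adjmx (blockrow N i) *m M) (mxvec_index j a) s = (j == i)%:R * M a s.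
Proof.
rewrite mxE (bigD1 a) //= big1 => [|b neq_ba].
  by rewrite !mxE eq_mxvec_index eqxx andbT conjC_nat addr0.
by rewrite !mxE eq_mxvec_index [a == _]eq_sym (negPf neq_ba) andbF conjC0 mul0r.
Qed.

Lemma blockrow_mul l N m (X : 'M[C]_(l * N, m)) i a s :
  (blockrow N i *m X) a s = X (mxvec_index i a) s.
Proof.
rewrite mxE (bigD1 (mxvec_index i a)) //= big1 => [|r /negPf neq_r].
  by rewrite mxE eqxx mul1r addr0.
by rewrite mxE neq_r mul0r.
Qed.

Lemma mul_adjmx_blockrow l N m (X : 'M[C]_(m, l * N)) i r b :
  (X *m adjmx (blockrow N i)) r b = X r (mxvec_index i b).
Proof.
rewrite mxE (bigD1 (mxvec_index i b)) //= big1 => [|s /negPf neq_s].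
  by rewrite !mxE eqxx conjC1 mulr1 addr0.
by rewrite !mxE neq_s conjC0 mulr0.
Qed.

Lemma blockmx_blockrow l N (X : 'M[C]_(l * N)) i :
  blockmx X i i = blockrow N i *m X *m adjmx (blockrow N i).
Proof. by apply/matrixP => a b; rewrite mul_adjmx_blockrow blockrow_mul mxE. Qed.

Lemma kron_delta_blockrow l N (W : 'M[C]_N) (i : 'I_l) :
  kron (delta_mx i i) W = adjmx (blockrow N i) *m W *m blockrow N i.
Proof.
apply: mxvec_index_matrixP => i' a j' b.
rewrite kron_mxvec_index mul_blockrow_mxvec_index adjmx_blockrow_mul mxE.
by case: (i' == i); case: (j' == i); rewrite ?(mul0r, mulr0, mul1r).
Qed.

End BlockMatrices.

Arguments blockrow {C l} N i.

Section PositiveSemidefinite.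
Variable C : numClosedFieldType.
Implicit Types (m n p : nat).

Lemma adjmxM m n p (A : 'M[C]_(m, n)) (B : 'M[C]_(n, p)) :
  adjmx (A *m B) = adjmx B *m adjmx A.
Proof. by rewrite /adjmx map_mxM trmx_mul. Qed.

Lemma adjmxK m n (A : 'M[C]_(m, n)) : adjmx (adjmx A) = A.
Proof. by apply/matrixP => i j; rewrite !mxE conjCK. Qed.

Lemma adjmxD m n (A B : 'M[C]_(m, n)) : adjmx (A + B) = adjmx A + adjmx B.
Proof. by apply/matrixP => i j; rewrite !mxE rmorphD. Qed.

Lemma adjmxZ m n c (A : 'M[C]_(m, n)) : adjmx (c *: A) = c^* *: adjmx A.
Proof. by apply/matrixP => i j; rewrite !mxE rmorphM. Qed.

Lemma adjmx0 m n : adjmx (0 : 'M[C]_(m, n)) = 0.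
Proof. by apply/matrixP => i j; rewrite !mxE rmorph0. Qed.

Lemma psdmx_congr m n (Q : 'M[C]_(m, n)) (X : 'M[C]_n) :
  psdmx X -> psdmx (Q *m X *m adjmx Q).
Proof.
move=> [hermX posX]; split; first by rewrite !adjmxM adjmxK hermX mulmxA.
by move=> v; have := posX (v *m Q); rewrite adjmxM !mulmxA.
Qed.

Lemma psdmx0 n : psdmx (0 : 'M[C]_n).
Proof. by split=> [|v]; rewrite ?adjmx0 // mulmx0 mul0mx mxE. Qed.

Lemma psdmxD n (A B : 'M[C]_n) : psdmx A -> psdmx B -> psdmx (A + B).
Proof.
move=> [hermA posA] [hermB posB]; split; first by rewrite adjmxD hermA hermB.
by move=> v; rewrite mulmxDr mulmxDl mxE addr_ge0.
Qed.

Lemma psdmxZ n c (A : 'M[C]_n) : 0 <= c -> psdmx A -> psdmx (c *: A).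
Proof.
move=> c_ge0 [hermA posA]; split; first by rewrite adjmxZ geC0_conj // hermA.
by move=> v; rewrite -scalemxAr -scalemxAl mxE mulr_ge0.
Qed.

Lemma psdmx_sum I (r : seq I) (P : pred I) n (F : I -> 'M[C]_n) :
  (forall i, P i -> psdmx (F i)) -> psdmx (\sum_(i <- r | P i) F i).
Proof.
move=> psdF; elim/big_rec: _ => [|i X Pi psdX]; first exact: psdmx0.
exact: psdmxD (psdF _ Pi) psdX.
Qed.

Lemma quadform_delta n (X : 'M[C]_n) (a b : 'I_n) :
  (delta_mx (0 : 'I_1) a *m X *m adjmx (delta_mx (0 : 'I_1) b)) 0 0 = X a b.
Proof.
have -> : adjmx (delta_mx (0 : 'I_1) b) = delta_mx b 0 :> 'M[C]_(n, 1).
  by apply/matrixP => i j; rewrite !mxE conjC_nat andbC.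
by rewrite -rowE -colE !mxE.
Qed.

Lemma psdmx_diag_ge0 n (X : 'M[C]_n) a : psdmx X -> 0 <= X a a.
Proof. by move=> [_ posX]; rewrite -quadform_delta. Qed.

Lemma psdmx_diag0_eq0 n (X : 'M[C]_n) a b :
  psdmx X -> X a a = 0 -> X b b = 0 -> X a b = 0.
Proof.
move=> [hermX posX] Xaa0 Xbb0; set x := X a b.
have Xba : X b a = x^* by rewrite -[in LHS]hermX !mxE.
(* the quadratic form at e_a - x e_b equals -2 |x|^2 *)
have := posX (delta_mx 0 a + (- x) *: delta_mx 0 b).
rewrite adjmxD adjmxZ !mulmxDl !mulmxDr -!scalemxAl -!scalemxAr.
rewrite ![(_ + _ : matrix _ _ _) _ _]mxE ![(_ *: _ : matrix _ _ _) _ _]mxE !quadform_delta Xaa0 Xbb0 Xba -/x rmorphN /= !mulr0 addr0 add0r.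
rewrite !mulNr [x^* * x]mulrC -opprD oppr_ge0 => xx_le0.
apply/eqP; rewrite -mul_conjC_eq0 eq_le mul_conjC_ge0 andbT.
by apply: le_trans xx_le0; rewrite lerDl mul_conjC_ge0.
Qed.

Lemma psdmx_trace_eq0 n (X : 'M[C]_n) : psdmx X -> \tr X = 0 -> X = 0.
Proof.
move=> psdX /eqP; rewrite psumr_eq0 => [/allP diag0|a _]; last first.
  exact: psdmx_diag_ge0.
have Xaa0 a : X a a = 0 by apply/eqP/diag0; rewrite mem_index_enum.
by apply/matrixP => a b; rewrite mxE psdmx_diag0_eq0.
Qed.

Lemma psdmx_blockmx l N (X : 'M[C]_(l * N)) i : psdmx X -> psdmx (blockmx X i i).
Proof. by rewrite blockmx_blockrow; apply: psdmx_congr. Qed.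

Lemma psdmx_kron_delta l N (W : 'M[C]_N) (i : 'I_l) :
  psdmx W -> psdmx (kron (delta_mx i i) W).
Proof.
move=> psdW; rewrite kron_delta_blockrow.
by rewrite -[X in _ *m _ *m X](adjmxK (blockrow N i)); apply: psdmx_congr.
Qed.

Lemma psdmx_blockdiag l N (a : 'I_l -> C) (W : 'I_l -> 'M[C]_N) :
  (forall i, 0 <= a i) -> (forall i, psdmx (W i)) -> psdmx (blockdiag a W).
Proof.
move=> a_ge0 psdW; apply: psdmx_sum => i _.
by apply/psdmx_kron_delta/psdmxZ.
Qed.

End PositiveSemidefinite.

Section PinchedChannel.
Variables (C : numClosedFieldType) (l N k : nat).
Variable Psi : {linear 'M[C]_N -> 'M[C]_k}.

Lemma density_diag_block_decomposition (X : 'M[C]_(l * N)) : density X ->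
  exists2 a : 'I_l -> C, in_simplex a &
    exists2 Z : 'I_l -> 'M[C]_N, (forall i, density (Z i)) &
      forall i, blockmx X i i = a i *: Z i.
Proof.
move=> [psdX trX1]; pose a i := \tr (blockmx X i i).
have psdXi i : psdmx (blockmx X i i) by apply: psdmx_blockmx.
have a_ge0 i : 0 <= a i by rewrite sumr_ge0 // => b _; apply: psdmx_diag_ge0.
have sum_a : \sum_i a i = 1 by rewrite -trX1 mxtrace_blockmx.
have /existsP [j0 a_j0_neq0] : [exists j, a j != 0].
  apply: contraT => /existsPn a0; move: sum_a.
  by rewrite big1 => [/eqP|j _]; [rewrite eq_sym oner_eq0 | apply/eqP/negPn/a0].
(* blocks of zero trace are replaced by the normalized block j0 *)
pose c i := if a i != 0 then i else j0.
have a_c_neq0 i : a (c i) != 0 by rewrite /c; case: ifP.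
pose Z i := (a (c i))^-1 *: blockmx X (c i) (c i).
exists a => //; exists Z => [i|i].
  split; last by rewrite mxtraceZ mulVf.
  by apply: psdmxZ => //; rewrite invr_ge0.
have [ai0|ai_neq0] := eqVneq (a i) 0.
  by rewrite ai0 scale0r (psdmx_trace_eq0 (psdXi i) ai0).
by rewrite /Z /c ai_neq0 scalerA divff // scale1r.
Qed.

Lemma tensmap_pinching_blockdiag (a : 'I_l -> C) (Z : 'I_l -> 'M[C]_N) :
  tensmap (@pinching C l) Psi (blockdiag a Z) = blockdiag a (fun i => Psi (Z i)).
Proof.
rewrite tensmap_pinching; apply: eq_bigr => i _.
by rewrite blockmx_blockdiag linearZ scale1r.
Qed.

Lemma density_blockdiag (a : 'I_l -> C) (Z : 'I_l -> 'M[C]_N) :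
  in_simplex a -> (forall i, density (Z i)) -> density (blockdiag a Z).
Proof.
move=> [a_ge0 sum_a] densZ; split.
  by apply: psdmx_blockdiag => // i; case: (densZ i).
rewrite mxtrace_blockmx -sum_a; apply: eq_bigr => i _.
by rewrite blockmx_blockdiag mxtraceZ (proj2 (densZ i)) mulr1.
Qed.

End PinchedChannel.

Theorem proposition8p3 (C : numClosedFieldType) (l N k : nat)
    (Psi : {linear 'M[C]_N -> 'M[C]_k}) :
  quantum_channel Psi ->
  forall Y : 'M[C]_(l * k),
    (exists X : 'M[C]_(l * N), density X /\ Y = tensmap (@pinching C l) Psi X) <->
    (exists (a : 'I_l -> C) (B : 'I_l -> 'M[C]_k),
        in_simplex a /\
        (forall i, exists Z : 'M[C]_N, density Z /\ B i = Psi Z) /\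
        Y = blockdiag a B).
Proof.
move=> _ Y; split.
  move=> [X [densX ->]].
  have [a simplex_a [Z densZ blockX]] := density_diag_block_decomposition densX.
  exists a, (fun i => Psi (Z i)); split=> //; split; first by move=> i; exists (Z i).
  by rewrite tensmap_pinching; apply: eq_bigr => i _; rewrite blockX linearZ scale1r.
move=> [a [B [simplex_a [imB ->]]]].
have [Z densZ] := fin_all_exists imB.
exists (blockdiag a Z); split; first by apply: density_blockdiag => // i; case: (densZ i).
rewrite tensmap_pinching_blockdiag; apply: eq_bigr => i _.
by rewrite (proj2 (densZ i)).
Qed.
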